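(* Let $L$ be an integral lattice containing no vectors of norm one (i.e. no $v$ with $v\cdot v=1$). If $v\in L$ is contained in an obtuse superbase for $L$, then $v\cdot v\le\mathrm{disc}(L)$.
   Context: An integral lattice is a finitely generated free abelian group with a symmetric positive definite integral bilinear form; $\mathrm{disc}(L)$ is the determinant of its Gram matrix. An obtuse superbase of a rank-$k$ lattice $L$ is a set $\{v_0,\dots,v_k\}\subseteq L$ spanning $L$ with $v_i\cdot v_j\le0$ for $i\ne j$ and $v_0+\dots+v_k=0$. *)

(* An integral lattice of rank k is modelled (up to isometry)
   as Z^k (row vectors 'rV[int]_k) with a Gram matrix G : 'M[int]_k w.r.t.
   the standard basis; the form is u.v = u G v^T. *)
From mathcomp Require Import all_boot all_order all_algebra.
Set Implicit Arguments. Unset Strict Implicit. Unset Printing Implicit Defensive.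
Import Order.TTheory GRing.Theory Num.Theory.
Local Open Scope ring_scope.

Definition bform (k : nat) (G : 'M[int]_k) (u v : 'rV[int]_k) : int :=
  (u *m G *m v^T) 0 0.

Definition integral_lattice (k : nat) (G : 'M[int]_k) : Prop :=
  G^T = G /\ forall x : 'rV[int]_k, x != 0 -> 0 < bform G x x.

Definition disc (k : nat) (G : 'M[int]_k) : int := \det G.

Definition spans (k m : nat) (vs : 'I_m -> 'rV[int]_k) : Prop :=
  forall x : 'rV[int]_k, exists c : 'I_m -> int, x = \sum_(i < m) c i *: vs i.

Definition obtuse_superbase (k : nat) (G : 'M[int]_k)
    (vs : 'I_k.+1 -> 'rV[int]_k) : Prop :=
  [/\ spans vs,
      (forall i j : 'I_k.+1, i != j -> bform G (vs i) (vs j) <= 0)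
    & \sum_(i < k.+1) vs i = 0].

Definition no_norm_one (k : nat) (G : 'M[int]_k) : Prop :=
  forall x : 'rV[int]_k, bform G x x != 1.

From mathcomp Require Import all_boot all_order all_algebra.
From mathcomp Require Import zify ring.
Import Order.TTheory GRing.Theory Num.Theory.
Set Implicit Arguments.
Unset Strict Implicit.
Unset Printing Implicit Defensive.

Local Open Scope ring_scope.

(* Deleting v = v_0 from an obtuse superbase leaves a basis v_1, ..., v_k of L
   whose Gram matrix M has the same determinant as L, entry sum v.v,
   nonpositive off-diagonal entries and nonnegative row sums (the i-th row sum
   is -v_i.v_0).  For such a matrix, det M >= r_j det M', where r_j is the j-th
   row sum and M' is M with row and column j deleted: lowering M_jj by r_j
   keeps the matrix diagonally dominant, hence of nonnegative determinant.
   Induction on the rank then bounds the entry sum of M by det M, using that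
   M_jj and the entry sum of M' are norms of nonzero vectors, hence >= 2. *)

Definition rowsum (R : nmodType) m n (M : 'M[R]_(m, n)) (i : 'I_m) : R :=
  \sum_j M i j.

Definition mxsum (R : nmodType) m n (M : 'M[R]_(m, n)) : R :=
  \sum_i rowsum M i.

Section PrincipalMinors.

Variable R : comPzRingType.

Lemma det_rowsum0 n (M : 'M[R]_n.+1) : (forall i, rowsum M i = 0) -> \det M = 0.
Proof.
move=> M0; pose u : 'cV[R]_n.+1 := const_mx 1.
have Mu0 : M *m u = 0.
  apply/colP => i; rewrite !mxE -[RHS](M0 i).
  by apply: eq_bigr => l _; rewrite mxE mulr1.
have := congr1 (fun A => (A *m u) 0 0) (mul_adj_mx M).
by rewrite /= -mulmxA Mu0 mulmx0 mul_scalar_mx !mxE mulr1 => <-.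
Qed.

Lemma rowsum_sub_delta n (M : 'M[R]_n) j a i :
  rowsum (M - a *: delta_mx j j) i = rowsum M i - a *+ (i == j).
Proof.
rewrite /rowsum; under eq_bigr do rewrite !mxE.
rewrite sumrB; congr (_ - _); rewrite (bigD1 j) //= big1 => [|l /negbTE nlj].
  by rewrite eqxx andbT mulr_natr addr0.
by rewrite nlj andbF mulr0.
Qed.

Lemma det_split_diag n (M : 'M[R]_n.+1) j a :
  \det M = \det (M - a *: delta_mx j j) + a * \det (row' j (col' j M)).
Proof.
rewrite (expand_det_row M j) (expand_det_row (M - a *: delta_mx j j) j).
have cofE l : cofactor (M - a *: delta_mx j j) j l = cofactor M j l.
  rewrite /cofactor; congr (_ * \det _); apply/matrixP => p q.
  by rewrite !mxE eq_sym (negbTE (neq_lift j p)) mulr0 subr0.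
under [X in _ = X + _]eq_bigr => l _ do rewrite cofE !mxE.
rewrite (bigD1 j) //= [in RHS](bigD1 j) //= eqxx mulr1.
under [X in _ = _ + X + _]eq_bigr => l /negbTE nlj do rewrite nlj andbF mulr0 subr0.
by rewrite /cofactor -signr_odd addnn odd_double expr0 mul1r; ring.
Qed.

Lemma mxsum_row'_col' n (M : 'M[R]_n.+1) j : M^T = M ->
  mxsum M = rowsum M j *+ 2 - M j j + mxsum (row' j (col' j M)).
Proof.
move=> symM; have Mji l : M l j = M j l by rewrite -[in LHS]symM mxE.
have rowsum_lift i : rowsum M i = M i j + \sum_b M i (lift j b).
  exact: bigD1_ord.
have offdiag_j : \sum_b M j (lift j b) = rowsum M j - M j j.
  by rewrite [rowsum M j]rowsum_lift [M j j + _]addrC addrK.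
rewrite /mxsum (bigD1_ord j) //=; under eq_bigr do rewrite rowsum_lift Mji.
rewrite big_split /= offdiag_j mulr2n -!addrA; congr (_ + (_ + (_ + _))).
by apply: eq_bigr => a _; apply: eq_bigr => b _; rewrite !mxE.
Qed.

Lemma row'_col'_mulmx n (M : 'M[R]_n.+1) j :
  row' j (col' j M) = row' j 1%:M *m M *m (row' j 1%:M)^T.
Proof.
have row'E p (A : 'M[R]_(n.+1, p)) : row' j A = row' j 1%:M *m A by exact: rowsubE.
by rewrite -[col' j M]trmxK tr_col' row'E [row' j M^T]row'E trmx_mul trmxK mulmxA.
Qed.

Lemma row'1_mul_tr n (j : 'I_n.+1) :
  row' j 1%:M *m (row' j 1%:M)^T = 1%:M :> 'M[R]_n.
Proof.
apply/matrixP => a b.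
by rewrite row'Esub mul_rowsub_mx mul1mx tr_row' trmx1 !mxE (inj_eq lift_inj).
Qed.

End PrincipalMinors.

Section DominantZMatrices.

Variable R : numDomainType.

Definition dominantZ n (M : 'M[R]_n) : Prop :=
  (forall i j, i != j -> M i j <= 0) /\ (forall i, 0 <= rowsum M i).

Lemma dominantZ_minor n (M : 'M[R]_n.+1) j :
  dominantZ M -> dominantZ (row' j (col' j M)).
Proof.
move=> [offM rowM]; split=> [a b neq_ab | a].
  by rewrite !mxE offM // (inj_eq lift_inj).
have -> : rowsum (row' j (col' j M)) a = \sum_b M (lift j a) (lift j b).
  by apply: eq_bigr => b _; rewrite !mxE.
have le0_Maj : M (lift j a) j <= 0 by rewrite offM // eq_sym neq_lift.
have := rowM (lift j a); rewrite /rowsum (bigD1_ord j) //= => ge0_sum.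
exact: le_trans ge0_sum (ler_wnDl le0_Maj (lexx _)).
Qed.

Lemma dominantZ_sub_delta n (M : 'M[R]_n) j a :
  dominantZ M -> a <= rowsum M j -> dominantZ (M - a *: delta_mx j j).
Proof.
move=> [offM rowM] le_a; split=> [i l neq_il | i]; last first.
  by rewrite rowsum_sub_delta; case: eqP => [->|_]; rewrite ?subr_ge0 ?subr0.
rewrite !mxE; case: eqP => [eq_ij|]; case: eqP => [eq_lj|] //=.
  by move: neq_il; rewrite eq_ij eq_lj eqxx.
all: by rewrite mulr0 subr0 offM.
Qed.

Lemma det_dominantZ_ge0 n (M : 'M[R]_n) : dominantZ M -> 0 <= \det M.
Proof.
elim: n M => [|n IHn] M; first by rewrite det_mx00.
move Epos: #|[set i | 0 < rowsum M i]| => c.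
elim: c M Epos => [|c IHc] M Epos domM; have [offM rowM] := domM.
  rewrite det_rowsum0 // => i; have /setP/(_ i) := cards0_eq Epos.
  by rewrite !inE lt_def rowM andbT => /negbT; rewrite negbK => /eqP.
have [j] : exists j, j \in [set i | 0 < rowsum M i].
  by apply/set0Pn; rewrite -card_gt0 Epos.
rewrite inE => rj_gt0.
rewrite (det_split_diag M j (rowsum M j)); apply: addr_ge0; last first.
  by apply: mulr_ge0; [exact: rowM | exact/IHn/dominantZ_minor].
apply: IHc; last exact: dominantZ_sub_delta.
have -> : [set i | 0 < rowsum (M - rowsum M j *: delta_mx j j) i]
          = [set i | 0 < rowsum M i] :\ j.
  apply/setP => i; rewrite !inE rowsum_sub_delta.
  by case: eqP => [->|_]; rewrite ?subrr ?ltxx ?subr0.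
by have := cardsD1 j [set i | 0 < rowsum M i]; rewrite Epos inE rj_gt0 => -[].
Qed.

Lemma rowsum_mul_minor_le_det n (M : 'M[R]_n.+1) j :
  dominantZ M -> rowsum M j * \det (row' j (col' j M)) <= \det M.
Proof.
move=> domM; rewrite (det_split_diag M j (rowsum M j)) lerDr.
exact/det_dominantZ_ge0/dominantZ_sub_delta.
Qed.

End DominantZMatrices.

Section IntegralForms.

Variables (k : nat) (G : 'M[int]_k).

Lemma bform_suml (I : finType) (u : I -> 'rV[int]_k) w :
  bform G (\sum_i u i) w = \sum_i bform G (u i) w.
Proof. by rewrite /bform !mulmx_suml summxE. Qed.

Lemma bform_sumr u (I : finType) (w : I -> 'rV[int]_k) :
  bform G u (\sum_i w i) = \sum_i bform G u (w i).
Proof. by rewrite /bform raddf_sum mulmx_sumr summxE. Qed.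

Lemma bformNl u w : bform G (- u) w = - bform G u w.
Proof. by rewrite /bform !mulNmx mxE. Qed.

Lemma bformNr u w : bform G u (- w) = - bform G u w.
Proof. by rewrite /bform linearN /= mulmxN mxE. Qed.

Lemma bform_delta i j : bform G (delta_mx 0 i) (delta_mx 0 j) = G i j.
Proof. by rewrite /bform trmx_delta -rowE -colE !mxE. Qed.

Lemma bform_const1 : bform G (const_mx 1) (const_mx 1) = mxsum G.
Proof.
rewrite /bform mxE /mxsum exchange_big /=; apply: eq_bigr => i _.
by rewrite !mxE mulr1; apply: eq_bigr => l _; rewrite mxE mul1r.
Qed.

Lemma bform_mulmx m (P : 'M[int]_(m, k)) x y :
  bform (P *m G *m P^T) x y = bform G (x *m P) (y *m P).
Proof. by rewrite /bform trmx_mul !mulmxA. Qed.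

End IntegralForms.

Lemma congr_mx_entry k m (G : 'M[int]_k) (P : 'M[int]_(m, k)) a b :
  (P *m G *m P^T) a b = bform G (row a P) (row b P).
Proof. by rewrite !rowE -bform_mulmx bform_delta. Qed.

Lemma integral_lattice_congr k m (G : 'M[int]_k) (P : 'M[int]_(m, k)) Q :
  P *m Q = 1%:M -> integral_lattice G -> integral_lattice (P *m G *m P^T).
Proof.
move=> PQ [symG posG]; split; first by rewrite !trmx_mul trmxK symG mulmxA.
move=> x x_neq0; rewrite bform_mulmx posG //; apply: contraNneq x_neq0 => xP0.
by rewrite -[x]mulmx1 -PQ mulmxA xP0 mul0mx.
Qed.

Lemma no_norm_one_congr k m (G : 'M[int]_k) (P : 'M[int]_(m, k)) :
  no_norm_one G -> no_norm_one (P *m G *m P^T).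
Proof. by move=> n1G x; rewrite bform_mulmx. Qed.

Lemma integral_lattice_minor n (G : 'M[int]_n.+1) j :
  integral_lattice G -> integral_lattice (row' j (col' j G)).
Proof. by rewrite row'_col'_mulmx; apply/integral_lattice_congr/row'1_mul_tr. Qed.

Lemma no_norm_one_minor n (G : 'M[int]_n.+1) j :
  no_norm_one G -> no_norm_one (row' j (col' j G)).
Proof. by rewrite row'_col'_mulmx; apply: no_norm_one_congr. Qed.

Lemma norm_ge2 k (G : 'M[int]_k) x :
  integral_lattice G -> no_norm_one G -> x != 0 -> 2 <= bform G x x.
Proof. by move=> [_ posG] /(_ x) n1x /posG; lia. Qed.

Lemma diag_ge2 k (G : 'M[int]_k) j :
  integral_lattice G -> no_norm_one G -> 2 <= G j j.
Proof.
move=> latG n1G; rewrite -bform_delta norm_ge2 //.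
by apply/eqP => /matrixP/(_ 0 j); rewrite !mxE !eqxx; apply/eqP; rewrite oner_eq0.
Qed.

Lemma mxsum_ge2 k (G : 'M[int]_k.+1) :
  integral_lattice G -> no_norm_one G -> 2 <= mxsum G.
Proof.
move=> latG n1G; rewrite -bform_const1 norm_ge2 //.
by apply/eqP => /rowP/(_ 0); rewrite !mxE; apply/eqP; rewrite oner_eq0.
Qed.

Lemma mxsum_le_det k (M : 'M[int]_k) :
  integral_lattice M -> no_norm_one M -> dominantZ M -> mxsum M <= \det M.
Proof.
case: k M => [|k] M; first by rewrite det_mx00 /mxsum big_ord0.
elim: k M => [|n IH] M latM n1M domM.
  by rewrite det_mx11 /mxsum /rowsum !big_ord1.
have [j rj_gt0] : exists j, 0 < rowsum M j.
  apply/existsP; apply: contraTT (mxsum_ge2 latM n1M); rewrite negb_exists -ltNge.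
  move=> /forallP rows_le0; apply: le_lt_trans (sumr_le0 _ _) _ => // i _.
  by rewrite leNgt rows_le0.
set S := row' j (col' j M).
have latS : integral_lattice S by exact: integral_lattice_minor.
have n1S : no_norm_one S by exact: no_norm_one_minor.
(* 2r - m + T <= 2r - 2 + T <= rT <= rD, as (r - 1)(T - 2) >= 0 *)
have arith (r m T D dM : int) :
    0 < r -> 2 <= m -> 2 <= T -> T <= D -> r * D <= dM -> r *+ 2 - m + T <= dM.
  by move=> *; rewrite mulr2n; nia.
rewrite (mxsum_row'_col' j latM.1); apply: (arith _ _ _ (\det S)) => //.
- exact: diag_ge2.
- exact: mxsum_ge2.
- exact: IH (dominantZ_minor j domM).
- exact: rowsum_mul_minor_le_det.
Qed.

Lemma sum_lift_eq_opp (V : zmodType) n (f : 'I_n.+1 -> V) i0 :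
  \sum_i f i = 0 -> \sum_a f (lift i0 a) = - f i0.
Proof. by rewrite (bigD1_ord i0) //= => /eqP; rewrite addrC addr_eq0 => /eqP. Qed.

Lemma det_congr_unimodular k (G P C : 'M[int]_k) :
  C *m P = 1%:M -> \det (P *m G *m P^T) = \det G.
Proof.
move=> CP; have /intUnitRing.unitzPl : \det C * \det P = 1.
  by rewrite -det_mulmx CP det1.
rewrite !det_mulmx det_tr mulrC mulrA qualifE => /orP[] /eqP ->.
  by rewrite mul1r.
by rewrite mulrNN mul1r.
Qed.

Definition basis_without k (vs : 'I_k.+1 -> 'rV[int]_k) i0 : 'M[int]_k :=
  \matrix_a vs (lift i0 a).

Section SuperbaseGram.

Variables (k : nat) (G : 'M[int]_k) (vs : 'I_k.+1 -> 'rV[int]_k) (i0 : 'I_k.+1).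
Hypothesis sum_vs0 : \sum_i vs i = 0.

Let P := basis_without vs i0.

Lemma basis_without_left_inverse : spans vs -> exists C, C *m P = 1%:M.
Proof.
move=> span_vs.
have [c cE] := fin_all_exists (fun m : 'I_k => span_vs (delta_mx 0 m)).
exists (\matrix_(m, a) (c m (lift i0 a) - c m i0)).
apply/row_matrixP => m; rewrite row_mul row1 cE mulmx_sum_row (bigD1_ord i0) //=.
rewrite -[vs i0]opprK -(sum_lift_eq_opp i0 sum_vs0) scalerN scaler_sumr -sumrN -big_split.
by apply: eq_bigr => a _ /=; rewrite rowK !mxE scalerBl addrC.
Qed.

Lemma gram_without_entry a b :
  (P *m G *m P^T) a b = bform G (vs (lift i0 a)) (vs (lift i0 b)).
Proof. by rewrite congr_mx_entry !rowK. Qed.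

Lemma dominantZ_gram_without :
  (forall i j, i != j -> bform G (vs i) (vs j) <= 0) -> dominantZ (P *m G *m P^T).
Proof.
move=> obtuse; split=> [a b neq_ab | a].
  by rewrite gram_without_entry obtuse // (inj_eq lift_inj).
rewrite /rowsum; under eq_bigr do rewrite gram_without_entry.
rewrite -bform_sumr (sum_lift_eq_opp i0 sum_vs0) bformNr oppr_ge0.
by rewrite obtuse // eq_sym neq_lift.
Qed.

Lemma mxsum_gram_without : mxsum (P *m G *m P^T) = bform G (vs i0) (vs i0).
Proof.
rewrite /mxsum /rowsum; under eq_bigr do under eq_bigr do rewrite gram_without_entry.
under eq_bigr do rewrite -bform_sumr.
by rewrite -bform_suml (sum_lift_eq_opp i0 sum_vs0) bformNl bformNr opprK.
Qed.

End SuperbaseGram.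

Theorem lemma2p10 (k : nat) (G : 'M[int]_k) (v : 'rV[int]_k) :
  integral_lattice G -> no_norm_one G ->
  (exists vs : 'I_k.+1 -> 'rV[int]_k, obtuse_superbase G vs /\ exists i, vs i = v) ->
  bform G v v <= disc G.
Proof.
move=> latG n1G [vs [[span_vs obtuse sum_vs0] [i0 <-]]].
have [C CP] := basis_without_left_inverse i0 sum_vs0 span_vs.
rewrite /disc -(det_congr_unimodular G CP) -(mxsum_gram_without G i0 sum_vs0).
apply: mxsum_le_det.
- exact: integral_lattice_congr (mulmx1C CP) latG.
- exact: no_norm_one_congr.
- exact: dominantZ_gram_without.
Qed.
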